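(* Let $A=(a(x),dF(x))$ and $B=(b(x),dF(x))$ be games. Then $f(p)=\exp\big(\int\log(pa(x)+(1-p)b(x))\,dF(x)\big)/e^r$ is concave on $[0,1]$.
   Context: A game is a pair $(a(x),dF(x))$ with $dF$ a probability measure on $\mathbb{R}$ and $a\ge0$ measurable with finite positive integral. A real $r$ is fixed; convention $\exp(-\infty)=0$. *)

From HB Require Import structures.
From mathcomp Require Import all_boot all_order all_algebra.
From mathcomp Require Import all_classical all_reals all_analysis.
Set Implicit Arguments. Unset Strict Implicit. Unset Printing Implicit Defensive.
Import Order.TTheory GRing.Theory Num.Theory.
Local Open Scope classical_set_scope.
Local Open Scope ring_scope.

Definition is_game (R : realType) (P : probability R R) (a : R -> R) : Prop :=
  [/\ measurable_fun setT a,
      (forall x, 0 <= a x),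
      P.-integrable setT (fun x => (a x)%:E) &
      (0 < \int[P]_x (a x)%:E)%E].

(* f(p) = exp( \int log(p a(x) + (1-p) b(x)) dF(x) ) / e^r,
   with log 0 = -oo (lne) and exp(-oo) = 0 (expeR). *)
Definition gamef (R : realType) (P : probability R R) (a b : R -> R) (r : R)
    (p : R) : \bar R :=
  (expeR (\int[P]_x lne ((p * a x + (1 - p) * b x)%:E)) * ((expR r)^-1)%:E)%E.

From HB Require Import structures.
From mathcomp Require Import all_boot all_order all_algebra.
From mathcomp Require Import all_classical all_reals all_analysis.
From mathcomp Require Import ring.
From mathcomp Require Import measurable_realfun.
Import Order.TTheory GRing.Theory Num.Theory.
Local Open Scope ring_scope.
Local Open Scope classical_set_scope.

(* With u_p := p a + (1 - p) b, f(p) is e^-r times the geometric mean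
   G(u) = exp (\int log u dF) of u_p, and p |-> u_p is affine, so it suffices
   that G is concave on nonnegative integrable functions.  G is positively
   homogeneous and superadditive: if G u = A > 0 and G v = B > 0, write
   u + v = l (S/A) u + (1 - l) (S/B) v with S = A + B and l = A / S; both
   rescaled functions have geometric mean S, so integrating the concavity of
   log gives log G(u + v) >= log S.  If G u = 0, monotonicity of G suffices. *)

Section integral_measurable.
Context d (T : measurableType d) (R : realType).
Variable mu : {measure set T -> \bar R}.
Variables (D : set T) (mD : measurable D).
Local Open Scope ereal_scope.

Lemma le_integral_measurable (f g : T -> \bar R) :
  measurable_fun D f -> measurable_fun D g -> {in D, forall x, f x <= g x} ->
  \int[mu]_(x in D) f x <= \int[mu]_(x in D) g x.
Proof.
move=> mf mg fg; rewrite integralE [leRHS]integralE leeB//.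
- apply: ge0_le_integral => //; [exact: measurable_funepos..|].
  by move=> x /mem_set; exact: funepos_le.
- apply: ge0_le_integral => //; [exact: measurable_funeneg..|].
  by move=> x /mem_set; exact: funeneg_le.
Qed.

Lemma fin_num_integrable (f : T -> \bar R) :
  measurable_fun D f -> \int[mu]_(x in D) f x \is a fin_num ->
  mu.-integrable D f.
Proof.
move=> mf ffin; apply/integrableP; split => //.
by apply/abse_integralP => //; rewrite -fin_num_abs.
Qed.

End integral_measurable.

Section lne_EFin.
Context {R : realType}.
Local Open Scope ereal_scope.

Lemma measurable_lne_comp d (T : measurableType d) (u : T -> R) :
  measurable_fun setT u -> measurable_fun setT (fun x => lne (u x)%:E).
Proof.
move=> mfu; apply: measurable_fun_ifT.
- by apply: measurable_fun_ler => //; exact: measurable_cst.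
- exact: measurable_cst.
- by apply/measurable_EFinP; exact: measurableT_comp.
Qed.

Lemma lne_EFin_le (x y : R) : (x <= y)%R -> lne x%:E <= lne y%:E.
Proof.
move=> xy; have [x0|x0] := leP x 0%R; first by rewrite le0_lneNy ?leNye.
have y0 := lt_le_trans x0 xy.
by rewrite !lne_EFin // lee_fin ler_ln ?posrE.
Qed.

Lemma lne_EFinM (c x : R) : (0 < c)%R ->
  lne (c * x)%:E = (ln c)%:E + lne x%:E.
Proof.
move=> c0; have [x0|x0] := leP x 0%R.
  by rewrite !le0_lneNy ?addeNy // lee_fin pmulr_rle0.
by rewrite !lne_EFin ?mulr_gt0 // lnM.
Qed.

Lemma lne_EFin_concave (l x y : R) : (0 <= l <= 1)%R ->
  l%:E * lne x%:E + (1 - l)%:E * lne y%:E <= lne (l * x + (1 - l) * y)%:E.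
Proof.
move=> /andP[l0 l1].
have [->|l0'] := eqVneq l 0%R.
  by rewrite mul0e add0e subr0 !mul1e mul0r add0r mul1r.
have [->|l1'] := eqVneq l 1%R.
  by rewrite subrr !mul0e adde0 mul1e mul0r addr0 mul1r.
have lgt0 : (0 < l)%R by rewrite lt0r l0' l0.
have l1gt0 : (0 < 1 - l)%R by rewrite subr_gt0 lt_neqAle l1' l1.
have [x0|x0] := leP x 0%R.
  by rewrite le0_lneNy // gt0_muleNy ?lte_fin // addNye leNye.
have [y0|y0] := leP y 0%R.
  by rewrite [lne y%:E]le0_lneNy // gt0_muleNy ?lte_fin // addeNy leNye.
rewrite !lne_EFin ?addr_gt0 ?mulr_gt0 // -!EFinM -EFinD lee_fin.
exact: (@concave_ln R (Itv01 l0 l1) x y x0 y0).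
Qed.

End lne_EFin.

Section geometric_mean.
Context {d} {T : measurableType d} {R : realType} (P : probability T R).
Local Open Scope ereal_scope.

Definition log_integral (u : T -> R) := \int[P]_x lne (u x)%:E.

Definition geomean (u : T -> R) := expeR (log_integral u).

Lemma measurable_integrable_EFin {u : T -> R} :
  P.-integrable setT (EFin \o u) -> measurable_fun setT u.
Proof. by move=> iu; apply/measurable_EFinP; exact: measurable_int iu. Qed.

Lemma integrable_EFinZ (c : R) {u : T -> R} :
  P.-integrable setT (EFin \o u) ->
  P.-integrable setT (EFin \o (fun x => c * u x)%R).
Proof.
move=> iu; rewrite (_ : _ \o _ = fun x => c%:E * (EFin \o u) x) //.
exact: integrableZl.
Qed.

Lemma integrable_EFinD {u v : T -> R} :
  P.-integrable setT (EFin \o u) -> P.-integrable setT (EFin \o v) ->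
  P.-integrable setT (EFin \o (fun x => u x + v x)%R).
Proof.
move=> iu iv; rewrite (_ : _ \o _ = (EFin \o u) \+ (EFin \o v)) //.
exact: integrableD.
Qed.

Section integrable.
Context {u : T -> R} (iu : P.-integrable setT (EFin \o u)).

Let mfu := measurable_integrable_EFin iu.

Lemma log_integral_lty : log_integral u < +oo.
Proof.
apply: le_lt_trans (integrable_lty measurableT iu).
apply: le_integral_measurable => //; first exact: measurable_lne_comp mfu.
  exact: measurable_int iu.
by move=> x _; apply/ltW/lne_sublinear.
Qed.

Lemma log_integral_fin_num :
  log_integral u != -oo -> log_integral u \is a fin_num.
Proof. by move=> Lu; rewrite fin_numE Lu lt_eqF // log_integral_lty. Qed.

Lemma integrable_lne : log_integral u \is a fin_num ->
  P.-integrable setT (fun x => lne (u x)%:E).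
Proof. by apply: fin_num_integrable => //; exact: measurable_lne_comp mfu. Qed.

Lemma log_integralZ (c : R) : (0 < c)%R -> log_integral u \is a fin_num ->
  log_integral (fun x => c * u x)%R = (ln c)%:E + log_integral u.
Proof.
move=> c0 Lu; rewrite /log_integral.
under eq_integral do rewrite lne_EFinM //.
rewrite integralD //; last exact: integrable_lne.
  by rewrite integral_cst //= probability_setT mule1.
exact: finite_measure_integrable_cst.
Qed.

End integrable.

Lemma le_log_integral (u v : T -> R) :
  measurable_fun setT u -> measurable_fun setT v -> (forall x, u x <= v x)%R ->
  log_integral u <= log_integral v.
Proof.
move=> mfu mfv uv.
apply: le_integral_measurable => //; try exact: measurable_lne_comp.
by move=> x _; exact: lne_EFin_le.
Qed.

Lemma log_integral_concave {l : R} {u v : T -> R} : (0 <= l <= 1)%R ->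
  P.-integrable setT (EFin \o u) -> P.-integrable setT (EFin \o v) ->
  log_integral u \is a fin_num -> log_integral v \is a fin_num ->
  l%:E * log_integral u + (1 - l)%:E * log_integral v
    <= log_integral (fun x => l * u x + (1 - l) * v x)%R.
Proof.
move=> l01 iu iv Lu Lv.
have ilu := integrableZl measurableT l (integrable_lne iu Lu).
have ilv := integrableZl measurableT (1 - l)%R (integrable_lne iv Lv).
rewrite /log_integral -!integralZl ?integrable_lne // -integralD //.
apply: le_integral_measurable => //.
- exact: measurable_int (integrableD measurableT ilu ilv).
- apply: measurable_lne_comp; apply: measurable_integrable_EFin.
  exact: (integrable_EFinD (integrable_EFinZ l iu)
                           (integrable_EFinZ (1 - l)%R iv)).
- by move=> x _; exact: lne_EFin_concave.
Qed.

Lemma le_geomeanZ (c : R) {u : T -> R} : (0 <= c)%R ->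
  P.-integrable setT (EFin \o u) ->
  c%:E * geomean u <= geomean (fun x => c * u x)%R.
Proof.
move=> c0 iu; have [->|c_neq0] := eqVneq c 0%R.
  by rewrite mul0e expeR_ge0.
have [Lu|Lu] := eqVneq (log_integral u) -oo.
  by rewrite /geomean Lu /= mule0 expeR_ge0.
rewrite /geomean log_integralZ ?log_integral_fin_num ?lt0r ?c_neq0 //.
by rewrite expeRD /= lnK ?posrE ?lt0r ?c_neq0.
Qed.

Lemma geomean_superadditive {u v : T -> R} :
  (forall x, 0 <= u x)%R -> (forall x, 0 <= v x)%R ->
  P.-integrable setT (EFin \o u) -> P.-integrable setT (EFin \o v) ->
  geomean u + geomean v <= geomean (fun x => u x + v x)%R.
Proof.
move=> u0 v0 iu iv.
have mfu := measurable_integrable_EFin iu.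
have mfv := measurable_integrable_EFin iv.
have mfuv := measurable_integrable_EFin (integrable_EFinD iu iv).
have [Lu|Lu] := eqVneq (log_integral u) -oo.
  rewrite /geomean Lu /= add0e lee_expeR.
  by apply: le_log_integral => // x; rewrite lerDr.
have [Lv|Lv] := eqVneq (log_integral v) -oo.
  rewrite /geomean Lv /= adde0 lee_expeR.
  by apply: le_log_integral => // x; rewrite lerDl.
have /fineK/esym LuE := log_integral_fin_num iu Lu.
have /fineK/esym LvE := log_integral_fin_num iv Lv.
set A := expR (fine (log_integral u)); set B := expR (fine (log_integral v)).
have A0 : (0 < A)%R by exact: expR_gt0.
have B0 : (0 < B)%R by exact: expR_gt0.
set S := (A + B)%R; have S0 : (0 < S)%R by exact: addr_gt0.
have rescale w c : P.-integrable setT (EFin \o w) -> log_integral w = c%:E ->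
    log_integral (fun x => S / expR c * w x)%R = (ln S)%:E.
  move=> iw Lw; rewrite log_integralZ ?Lw ?divr_gt0 ?expR_gt0 //.
  by rewrite -EFinD ln_div ?posrE ?expR_gt0 // expRK subrK.
have l01 : (0 <= A / S <= 1)%R.
  apply/andP; split; first by rewrite divr_ge0 // ltW.
  by rewrite ler_pdivrMr // mul1r lerDl ltW.
have Lu' := rescale u _ iu LuE; have Lv' := rescale v _ iv LvE.
have := log_integral_concave l01 (integrable_EFinZ (S / A) iu)
  (integrable_EFinZ (S / B) iv) ltac:(by rewrite Lu') ltac:(by rewrite Lv').
have -> : (fun x => A / S * (S / A * u x) + (1 - A / S) * (S / B * v x))%R
    = (fun x => u x + v x)%R.
  apply/funext => x; rewrite /S; field.
  by rewrite !gt_eqF // -/S.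
rewrite Lu' Lv' -!EFinM -EFinD (_ : (_ + _)%R = ln S); last by ring.
rewrite /geomean LuE LvE /= -EFinD -/S => LS.
by rewrite -(lnK S0) -[leLHS]/(expeR (ln S)%:E) lee_expeR.
Qed.

Lemma geomean_concave (t : R) {u v : T -> R} : (0 <= t <= 1)%R ->
  (forall x, 0 <= u x)%R -> (forall x, 0 <= v x)%R ->
  P.-integrable setT (EFin \o u) -> P.-integrable setT (EFin \o v) ->
  t%:E * geomean u + (1 - t)%:E * geomean v
    <= geomean (fun x => t * u x + (1 - t) * v x)%R.
Proof.
move=> /andP[t0 t1] u0 v0 iu iv; have t1' : (0 <= 1 - t)%R by rewrite subr_ge0.
apply: le_trans (leeD (le_geomeanZ t t0 iu) (le_geomeanZ (1 - t) t1' iv)) _.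
exact: (geomean_superadditive (fun x => mulr_ge0 t0 (u0 x))
  (fun x => mulr_ge0 t1' (v0 x))
  (integrable_EFinZ t iu) (integrable_EFinZ (1 - t) iv)).
Qed.

End geometric_mean.

Theorem lemmaD8 (R : realType) (P : probability R R) (a b : R -> R) (r : R) :
  is_game P a -> is_game P b ->
  forall p q t : R, 0 <= p <= 1 -> 0 <= q <= 1 -> 0 <= t <= 1 ->
  (t%:E * gamef P a b r p + (1 - t)%:E * gamef P a b r q
     <= gamef P a b r (t * p + (1 - t) * q))%E.
Proof.
move=> [_ a0 ia _] [_ b0 ib _] p q t hp hq ht.
pose u s x := s * a x + (1 - s) * b x.
have u0 s : 0 <= s <= 1 -> forall x, 0 <= u s x.
  by move=> /andP[s0 s1] x; rewrite addr_ge0 ?mulr_ge0 ?subr_ge0.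
have iu s : P.-integrable setT (EFin \o u s).
  exact: (integrable_EFinD P (integrable_EFinZ P s ia)
                            (integrable_EFinZ P (1 - s) ib)).
have gamefE s : gamef P a b r s = (geomean P (u s) * ((expR r)^-1)%:E)%E by [].
have [t0 t1] := andP ht.
rewrite !gamefE !muleA -ge0_muleDl ?mule_ge0 ?expeR_ge0 ?lee_fin ?subr_ge0 //.
apply: lee_wpmul2r; first by rewrite lee_fin invr_ge0 expR_ge0.
have -> : u (t * p + (1 - t) * q) = fun x => t * u p x + (1 - t) * u q x.
  by apply/funext => x; rewrite /u; ring.
exact (geomean_concave P t ht (u0 p hp) (u0 q hq) (iu p) (iu q)).
Qed.
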